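(* Let $G$ be a graph, $X\subseteq T\subseteq V(G)$, $k'$ an integer with $\sigma(T)\le k'$, and $H=H_T$ the torso of $T$ in $G$. Let $(L^*,R^* )$ be an $(X,T,k')$-witness. Then for every vertex $u\in(L^*\setminus R^* )\cap T$ there are at most $k'^2$ vertices $t\in(R^*\setminus L^* )\cap T$ such that $\{u,t\}\in E(H)$.
   Context: A vertex cut of $G$ is an ordered pair $(L,R)$ with $L\cup R=V(G)$, $L\setminus R,R\setminus L\ne\emptyset$ and no edge between $L\setminus R$ and $R\setminus L$. The adhesion $\sigma(T)$ is the maximum over connected components $C$ of $G\setminus T$ of $|N_G(C)|$. The torso $H_T$ of $T$ in $G$ is the graph with vertex set $T$ and an edge $\{u,v\}$ whenever $\{u,v\}\in E(G)$ or $u,v\in N_G(D)$ for some connected component $D$ of $G\setminus T$. An $(X,T,k')$-witness is a vertex cut $(L,R)$ of $G$ with $|L\cap R|\le k'$, $|L\cap T|>|L\cap R|$, and $X\subseteq R$. *)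

(* A finite simple graph on V : finType is a symmetric,
   irreflexive relation e : rel V. *)
From mathcomp Require Import all_boot.
Set Implicit Arguments. Unset Strict Implicit. Unset Printing Implicit Defensive.

Section Graph.
Variable V : finType.
Variable e : rel V.

Definition adj_out (S : {set V}) : rel V :=
  fun x y => [&& e x y, x \notin S & y \notin S].

(* the connected component of G \ S containing x (meaningful for x \notin S) *)
Definition comp_of (S : {set V}) (x : V) : {set V} :=
  [set y | connect (adj_out S) x y].

Definition components (S : {set V}) : {set {set V}} :=
  [set comp_of S x | x in ~: S].

Definition nbhd (C : {set V}) : {set V} :=
  [set v | (v \notin C) && [exists c in C, e c v]].

(* adhesion sigma(T): max over components C of G \ T of |N_G(C)| (0 if none) *)
Definition adhesion (T : {set V}) : nat :=
  \max_(C in components T) #|nbhd C|.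

Definition torso_edge (T : {set V}) (u v : V) : bool :=
  [&& u \in T, v \in T, u != v &
      e u v || [exists D in components T, (u \in nbhd D) && (v \in nbhd D)]].

Definition vertex_cut (L R : {set V}) : Prop :=
  [/\ L :|: R = [set: V], L :\: R != set0, R :\: L != set0 &
      forall x y, x \in L :\: R -> y \in R :\: L -> ~~ e x y].

Definition witness (X T : {set V}) (k' : nat) (L R : {set V}) : Prop :=
  [/\ vertex_cut L R, #|L :&: R| <= k', #|L :&: R| < #|L :&: T| & X \subset R].

End Graph.

From mathcomp Require Import all_boot.

Set Implicit Arguments.
Unset Strict Implicit.
Unset Printing Implicit Defensive.

(* A torso edge from u in L \ R to t in R \ L cannot be an edge of G, so it
   comes from a component D of G \ T having both u and t as neighbours.  Since
   D is connected and touches both sides of the cut, it meets the separator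
   L /\ R outside T.  Hence t lies in the neighbourhood of the component of
   some s in (L /\ R) \ T; there are at most k' such s, and each of these
   neighbourhoods has at most sigma(T) <= k' vertices. *)

Section VertexCut.
Variables (V : finType) (e : rel V) (L R : {set V}).
Hypothesis LR_cover : L :|: R = [set: V].
Hypothesis LR_noedge : forall x y, x \in L :\: R -> y \in R :\: L -> ~~ e x y.

Lemma mem_cut_cover x : (x \in L) || (x \in R).
Proof. by rewrite -in_setU LR_cover inE. Qed.

Lemma notin_cut_left x : x \notin L -> x \in R :\: L.
Proof.
by move=> xNL; rewrite inE xNL; move: (mem_cut_cover x); rewrite (negbTE xNL).
Qed.

Lemma notin_cut_right x : x \notin R -> x \in L :\: R.
Proof.
by move=> xNR; rewrite inE xNR; move: (mem_cut_cover x); rewrite (negbTE xNR) orbF.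
Qed.

Lemma nbr_of_strict_left x y : x \in L :\: R -> e x y -> y \in L.
Proof.
move=> xLR exy; apply: contraT => yNL.
by move: (LR_noedge xLR (notin_cut_left yNL)); rewrite exy.
Qed.

Lemma nbr_of_strict_right x y : y \in R :\: L -> e x y -> x \in R.
Proof.
move=> yRL exy; apply: contraT => xNR.
by move: (LR_noedge (notin_cut_right xNR) yRL); rewrite exy.
Qed.

Lemma connect_cut_sep (r : rel V) : subrel r e ->
  forall a b, a \in L -> b \in R -> connect r a b ->
  exists2 z, z \in L :&: R & connect r a z.
Proof.
move=> r_e a b aL bR /connectP[p r_p b_def]; rewrite {b}b_def in bR.
elim: p a aL r_p bR => [|y p IHp] a aL /= => [_ aR | /andP[ray r_p] bR].
  by exists a; rewrite ?inE ?aL ?aR.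
case aR: (a \in R); first by exists a; rewrite ?inE ?aL ?aR.
have yL : y \in L by apply: nbr_of_strict_left (r_e _ _ ray); rewrite inE aL aR.
have [z zLR yz] := IHp y yL r_p bR.
by exists z => //; apply: connect_trans (connect1 ray) yz.
Qed.

End VertexCut.

Section Components.
Variables (V : finType) (e : rel V).

Lemma comp_of_notin (S : {set V}) (x y : V) :
  x \notin S -> y \in comp_of e S x -> y \notin S.
Proof.
have cl : closed (adj_out e S) [predC S].
  by move=> a b /and3P[_ aS bS]; rewrite !inE aS bS.
by move=> xS; rewrite inE => /(closed_connect cl); rewrite !inE xS => <-.
Qed.

Lemma card_nbhd_comp_of (T : {set V}) (x : V) :
  x \notin T -> #|nbhd e (comp_of e T x)| <= adhesion e T.
Proof. by move=> xT; apply: leq_bigmax_cond; apply/imsetP; exists x; rewrite ?inE. Qed.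

Lemma card_cover_nbhd_comp (T A : {set V}) :
  #|cover [set nbhd e (comp_of e T s) | s in A :\: T]| <= #|A| * adhesion e T.
Proof.
set P := [set nbhd e (comp_of e T s) | s in A :\: T].
apply: leq_trans (leq_card_cover P) _.
apply: (@leq_trans (\sum_(N in P) adhesion e T)).
  by apply: leq_sum => _ /imsetP[s /setDP[_ sT] ->]; apply: card_nbhd_comp_of.
rewrite sum_nat_const leq_mul2r; apply/orP; right.
by apply: leq_trans (leq_imset_card _ _) _; apply/subset_leq_card/subsetDl.
Qed.

Hypothesis e_sym : symmetric e.

Lemma adj_out_sym (S : {set V}) : symmetric (adj_out e S).
Proof. by move=> x y; rewrite /adj_out e_sym [(x \notin S) && _]andbC. Qed.

Lemma comp_of_eq (S : {set V}) (x y : V) :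
  y \in comp_of e S x -> comp_of e S y = comp_of e S x.
Proof.
rewrite inE => xy; apply/setP => z; rewrite !inE.
by rewrite (same_connect (sym_connect_sym (adj_out_sym S)) xy).
Qed.

Section CrossingTheCut.
Variables (L R : {set V}).
Hypothesis LR_cover : L :|: R = [set: V].
Hypothesis LR_noedge : forall x y, x \in L :\: R -> y \in R :\: L -> ~~ e x y.

Lemma nbhd_comp_meets_sep (S : {set V}) (x u t : V) :
    u \in L :\: R -> t \in R :\: L ->
    u \in nbhd e (comp_of e S x) -> t \in nbhd e (comp_of e S x) ->
  exists2 s, s \in L :&: R & s \in comp_of e S x.
Proof.
move=> uLR tRL; rewrite !inE.
case/andP=> _ /existsP[c1 /andP[xc1 c1u]] /andP[_ /existsP[c2 /andP[xc2 c2t]]].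
rewrite !inE in xc1 xc2.
have c1L : c1 \in L by apply: (nbr_of_strict_left LR_cover LR_noedge uLR); rewrite e_sym.
have c2R : c2 \in R by exact: (nbr_of_strict_right LR_cover LR_noedge tRL c2t).
have c12 : connect (adj_out e S) c1 c2.
  by apply: connect_trans xc2; rewrite (sym_connect_sym (adj_out_sym S)).
have [|s sLR c1s] := connect_cut_sep LR_cover LR_noedge _ c1L c2R c12.
  by move=> a b /and3P[].
by exists s; rewrite // inE (connect_trans xc1 c1s).
Qed.

Lemma torso_edge_cross (T : {set V}) (u t : V) :
    u \in L :\: R -> t \in R :\: L -> torso_edge e T u t ->
  t \in cover [set nbhd e (comp_of e T s) | s in (L :&: R) :\: T].
Proof.
move=> uLR tRL /and4P[_ _ _ /orP[eut | /existsP[D /andP[DT /andP[uD tD]]]]].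
  by move: (LR_noedge uLR tRL); rewrite eut.
case/imsetP: DT => x; rewrite inE => xT DE; subst D.
have [s sLR sD] := nbhd_comp_meets_sep uLR tRL uD tD.
apply/bigcupP; exists (nbhd e (comp_of e T s)); last by rewrite (comp_of_eq sD).
by apply: imset_f; rewrite inE sLR (comp_of_notin xT sD).
Qed.

End CrossingTheCut.

End Components.

Theorem lemma5p14 (V : finType) (e : rel V)
  (e_sym : symmetric e) (e_irr : irreflexive e)
  (X T : {set V}) (XT : X \subset T) (k' : nat)
  (hsig : adhesion e T <= k')
  (Ls Rs : {set V}) (hw : witness e X T k' Ls Rs) :
  forall u, u \in (Ls :\: Rs) :&: T ->
    #|[set t in (Rs :\: Ls) :&: T | torso_edge e T u t]| <= k' ^ 2.
Proof.
case: hw => [[LR_cover _ _ LR_noedge] card_sep _ _] u /setIP[uLR _].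
have crossing_in_cover :
    [set t in (Rs :\: Ls) :&: T | torso_edge e T u t]
      \subset cover [set nbhd e (comp_of e T s) | s in (Ls :&: Rs) :\: T].
  apply/subsetP => t; rewrite inE => /andP[/setIP[tRL _]].
  exact: (torso_edge_cross e_sym LR_cover LR_noedge uLR tRL).
apply: leq_trans (subset_leq_card crossing_in_cover) _.
apply: leq_trans (card_cover_nbhd_comp e T (Ls :&: Rs)) _.
by rewrite -mulnn; apply: leq_mul.
Qed.
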